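(* For a non-negative integer $n$ and real numbers $p,x$, define \[ G_n(p,x)=\sum_{i=0}^n\binom{n}{i}\big((1-x)p+ix/n\big)^i\big(1-(1-x)p-ix/n\big)^{n-i}. \] Then for all non-negative integers $n$ (and all real $p,x$), \[ G_n(p,x)=\sum_{i=0}^n\frac{n!}{n^i(n-i)!}\,x^i. \]
   Context: Conventions: $0^0=1$; when $i=n=0$, the quantity $ix/n$ is interpreted with $0/0=1$ (so $G_0(p,x)=1$). *)

From mathcomp Require Import all_boot all_order all_algebra.
Set Implicit Arguments. Unset Strict Implicit. Unset Printing Implicit Defensive.
Import Order.TTheory GRing.Theory Num.Theory.
Local Open Scope ring_scope.

(* For n = 0, MathComp gives i x / n = 0 instead of the paper's convention
   (0/0 = 1), but the only term is raised to the power 0, so G_0 = 1 either way. *)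
Definition G (R : realFieldType) (n : nat) (p x : R) : R :=
  \sum_(i < n.+1)
     'C(n, i)%:R * ((1 - x) * p + i%:R * x / n%:R) ^+ i
       * (1 - (1 - x) * p - i%:R * x / n%:R) ^+ (n - i).

Definition Grhs (R : realFieldType) (n : nat) (x : R) : R :=
  \sum_(i < n.+1) (n`!%:R / (n%:R ^+ i * (n - i)`!%:R)) * x ^+ i.

(* Both sides are values at X = 1 (with a = (1 - x) p and z = x / n) of the
   polynomials  A_n = sum_k C(n,k) (a + k z)^k (X - a - k z)^(n-k)  and
   P_n = sum_j n^_j z^j X^(n-j).  Each family satisfies Q_(n+1)' = (n+1) Q_n, so
   by induction they agree once A_n(0) = P_n(0) = n! z^n; for A_n this is the
   n-th finite difference of the degree-n polynomial k |-> (a + k z)^n. *)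

From mathcomp Require Import all_boot all_order all_algebra.
From mathcomp Require Import ring.

Set Implicit Arguments.
Unset Strict Implicit.
Unset Printing Implicit Defensive.
Import Order.TTheory GRing.Theory Num.Theory.
Local Open Scope ring_scope.

Section FiniteDifference.
Variable R : comPzRingType.

Definition fdiff_pow (n m : nat) : R :=
  \sum_(k < n.+1) 'C(n, k)%:R * (-1) ^+ (n - k) * k%:R ^+ m.

Lemma fdiff_powS0 n : fdiff_pow n.+1 0 = 0.
Proof.
transitivity (((-1 : R) + 1) ^+ n.+1); last by rewrite addNr expr0n.
rewrite exprDn; apply: eq_bigr => k _.
by rewrite expr1n !expr0 !mulr1 mulr_natl.
Qed.

Lemma fdiff_powSS n m :
  fdiff_pow n.+1 m.+1 = n.+1%:R * \sum_(i < m.+1) 'C(m, i)%:R * fdiff_pow n i.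
Proof.
rewrite /fdiff_pow big_ord_recl /= expr0n /= mulr0 add0r mulr_sumr.
under [RHS]eq_bigr => i _ do rewrite mulr_sumr mulr_sumr.
rewrite [RHS]exchange_big /=; apply: eq_bigr => k _.
have bin_absorb : 'C(n.+1, k.+1)%:R * k.+1%:R = n.+1%:R * 'C(n, k)%:R :> R.
  by rewrite -!natrM mulnC -mul_bin_diag.
rewrite /bump /= add1n subSS exprS -[X in _ * X ^+ m]natr1 exprD1n !mulr_sumr.
apply: eq_bigr => i _; rewrite -[_ *+ 'C(m, i)]mulr_natr.
transitivity ('C(n.+1, k.+1)%:R * k.+1%:R
               * ((-1) ^+ (n - k) * k%:R ^+ i * 'C(m, i)%:R) : R).
  by ring.
by rewrite bin_absorb; ring.
Qed.

Lemma fdiff_pow_small n m : (m < n)%N -> fdiff_pow n m = 0.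
Proof.
elim: n m => [|n IHn] [|m] //= lt_mn; first exact: fdiff_powS0.
rewrite fdiff_powSS big1 ?mulr0 // => i _.
by rewrite IHn ?mulr0 // (leq_trans (ltn_ord i)).
Qed.

Lemma fdiff_pow_diag n : fdiff_pow n n = n`!%:R.
Proof.
elim: n => [|n IHn]; first by rewrite /fdiff_pow big_ord1 /= !mulr1.
rewrite fdiff_powSS big_ord_recr /= big1 ?add0r => [|i _].
  by rewrite binn IHn mul1r factS natrM.
by rewrite fdiff_pow_small ?mulr0.
Qed.

Lemma fdiff_affine_pow n (a z : R) :
  \sum_(k < n.+1) 'C(n, k)%:R * (-1) ^+ (n - k) * (a + k%:R * z) ^+ n
  = n`!%:R * z ^+ n.
Proof.
transitivity
  (\sum_(m < n.+1) 'C(n, m)%:R * a ^+ (n - m) * z ^+ m * fdiff_pow n m).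
  under eq_bigr => k _ do rewrite exprDn mulr_sumr.
  rewrite exchange_big /=; apply: eq_bigr => m _.
  rewrite /fdiff_pow mulr_sumr; apply: eq_bigr => k _.
  by rewrite exprMn -mulr_natr; ring.
rewrite big_ord_recr /= big1 ?add0r => [|m _].
  by rewrite fdiff_pow_diag subnn binn expr0 !mul1r mulrC.
by rewrite fdiff_pow_small ?mulr0.
Qed.

End FiniteDifference.

Section AppellSums.
Variable R : comNzRingType.

Lemma deriv_sum_scale_exp (c : nat -> nat -> R) (q : nat -> {poly R}) n :
    (forall k, (q k)^`() = 1) ->
    (forall k, (k <= n)%N -> c n.+1 k * (n.+1 - k)%:R = c n k * n.+1%:R) ->
  (\sum_(k < n.+2) c n.+1 k *: q k ^+ (n.+1 - k))^`()
    = (\sum_(k < n.+1) c n k *: q k ^+ (n - k)) *+ n.+1.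
Proof.
move=> dq1 c_rec; rewrite raddf_sum big_ord_recr /= subnn derivZ.
rewrite deriv_exp mulr0n scaler0 addr0 -sumrMnl; apply: eq_bigr => k _.
have le_kn : (k <= n)%N by rewrite -ltnS.
rewrite derivZ deriv_exp dq1 mul1r -scalerMnr !scalerMnl (subSn le_kn) /=.
rewrite -[_ *+ (n - k).+1]mulr_natr -[_ *+ n.+1]mulr_natr.
by rewrite -(subSn le_kn) c_rec.
Qed.

Definition abel_poly (b : nat -> R) n : {poly R} :=
  \sum_(k < n.+1) ('C(n, k)%:R * b k ^+ k) *: ('X - (b k)%:P) ^+ (n - k).

Definition ffact_poly (z : R) n : {poly R} :=
  \sum_(j < n.+1) ((n ^_ j)%:R * z ^+ j) *: 'X ^+ (n - j).

Lemma deriv_abel_poly b n : (abel_poly b n.+1)^`() = abel_poly b n *+ n.+1.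
Proof.
apply: (@deriv_sum_scale_exp (fun n k => 'C(n, k)%:R * b k ^+ k)
  (fun k => 'X - (b k)%:P)) => [k | k le_kn]; first exact: derivXsubC.
by rewrite mulrAC -natrM mulnC -mul_bin_down mulnC natrM mulrAC.
Qed.

Lemma deriv_ffact_poly z n : (ffact_poly z n.+1)^`() = ffact_poly z n *+ n.+1.
Proof.
apply: (@deriv_sum_scale_exp (fun n j => (n ^_ j)%:R * z ^+ j) (fun=> 'X))
  => [k | k _]; first exact: derivX.
by rewrite mulrAC -natrM -ffactnSr ffactSS mulnC natrM mulrAC.
Qed.

Lemma horner_abel_poly b n t :
  (abel_poly b n).[t]
    = \sum_(k < n.+1) 'C(n, k)%:R * b k ^+ k * (t - b k) ^+ (n - k).
Proof.
rewrite horner_sum; apply: eq_bigr => k _.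
by rewrite hornerZ horner_exp hornerXsubC.
Qed.

Lemma horner_ffact_poly z n t :
  (ffact_poly z n).[t] = \sum_(j < n.+1) (n ^_ j)%:R * z ^+ j * t ^+ (n - j).
Proof.
rewrite horner_sum; apply: eq_bigr => j _.
by rewrite hornerZ horner_exp hornerX.
Qed.

Lemma abel_poly_affine0 a z n :
  (abel_poly (fun k => a + k%:R * z) n).[0] = n`!%:R * z ^+ n.
Proof.
rewrite horner_abel_poly -(fdiff_affine_pow n a z); apply: eq_bigr => k _.
have le_kn : (k <= n)%N by rewrite -ltnS.
have split_pow : (a + k%:R * z) ^+ n
    = (a + k%:R * z) ^+ k * (a + k%:R * z) ^+ (n - k) by rewrite -exprD subnKC.
by rewrite sub0r [in LHS]exprNn split_pow; ring.
Qed.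

Lemma ffact_poly0 z n : (ffact_poly z n).[0] = n`!%:R * z ^+ n.
Proof.
rewrite horner_ffact_poly big_ord_recr /= big1 ?add0r => [|j _].
  by rewrite subnn ffactnn mulr1.
by rewrite expr0n subn_eq0 leqNgt ltn_ord mulr0.
Qed.

End AppellSums.

Lemma deriv_eq0_constant (R : numDomainType) (p : {poly R}) :
  p^`() = 0 -> p = (p.[0])%:P.
Proof.
move=> dp0; rewrite horner_coef0; apply/polyP => [[|i]]; rewrite coefC //=.
have := coef_deriv p i; rewrite dp0 coef0 => /esym/eqP.
by rewrite mulrn_eq0 /= => /eqP.
Qed.

Lemma eq_poly_deriv_horner0 (R : numDomainType) (p q : {poly R}) :
  p^`() = q^`() -> p.[0] = q.[0] -> p = q.
Proof.
move=> dpq pq0; apply/eqP; rewrite -subr_eq0; apply/eqP.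
rewrite [LHS]deriv_eq0_constant ?derivB ?dpq ?subrr //.
by rewrite hornerD hornerN pq0 subrr.
Qed.

Lemma abel_poly_affineE (R : numDomainType) (a z : R) n :
  abel_poly (fun k => a + k%:R * z) n = ffact_poly z n.
Proof.
elim: n => [|n IHn].
  by rewrite /abel_poly /ffact_poly !big_ord1 /= !mulr1 bin0.
apply: eq_poly_deriv_horner0; last by rewrite abel_poly_affine0 ffact_poly0.
by rewrite deriv_abel_poly deriv_ffact_poly IHn.
Qed.

Theorem lemma2p8 (R : realFieldType) (n : nat) (p x : R) :
  G n p x = Grhs n x.
Proof.
have := congr1 (horner^~ 1) (abel_poly_affineE ((1 - x) * p) (x / n%:R) n).
rewrite horner_abel_poly horner_ffact_poly => abel_at1.
rewrite /G /Grhs.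
under eq_bigr => i _ do rewrite -[i%:R * x / _]mulrA -addrA -opprD.
rewrite abel_at1; apply: eq_bigr => j _.
have le_jn : (j <= n)%N by rewrite -ltnS.
have fact_neq0 : (n - j)`!%:R != 0 :> R by rewrite pnatr_eq0 -lt0n fact_gt0.
rewrite -(ffact_fact le_jn) natrM expr1n mulr1 expr_div_n invfM.
by rewrite [_ / (n - j)`!%:R]mulrC [in RHS]mulrA mulfK //; ring.
Qed.
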